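(* For integers $1\le r\le t$, $$3rt + 2r + 2t +1 - \left\lfloor \frac{r}{2} \right\rfloor \le dim_s(C_{2r+1}\boxtimes C_{2t+1})\le 3rt + 2r + 2t +1.$$
   Context: $C_{m}$ is the cycle on $m$ vertices. For a connected graph $G$ with shortest-path distance $d_G$, a vertex $w$ strongly resolves $u,v$ if $d_G(w,u)=d_G(w,v)+d_G(v,u)$ or $d_G(w,v)=d_G(w,u)+d_G(u,v)$; $dim_s(G)$ is the minimum cardinality of a set $S\subseteq V(G)$ such that every pair of vertices is strongly resolved by some vertex of $S$. The strong product $G\boxtimes H$ has vertex set $V(G)\times V(H)$, with $(a,b)\sim(c,d)$ iff ($a=c$ and $bd\in E(H)$) or ($ac\in E(G)$ and $b=d$) or ($ac\in E(G)$ and $bd\in E(H)$). *)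

From mathcomp Require Import all_boot.
Set Implicit Arguments. Unset Strict Implicit. Unset Printing Implicit Defensive.

(* A (simple) graph: a finite vertex type T with an adjacency relation e
   (symmetric, irreflexive for the graphs used below). *)

Definition walk (T : finType) (e : rel T) (n : nat) (x y : T) : bool :=
  [exists p : n.-tuple T, path e x p && (last x p == y)].

(* shortest-path distance: least n < #|T| with a walk of length n from x to y
   (in a connected graph such an n always exists; otherwise returns #|T|) *)
Definition dist (T : finType) (e : rel T) (x y : T) : nat :=
  find (fun n => walk e n x y) (iota 0 #|T|).

Definition sresolves (T : finType) (e : rel T) (w u v : T) : bool :=
  (dist e w u == dist e w v + dist e v u) || (dist e w v == dist e w u + dist e u v).

Definition strong_resolving (T : finType) (e : rel T) (S : {set T}) : bool :=
  [forall u, forall v, [exists w in S, sresolves e w u v]].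

Definition sdim (T : finType) (e : rel T) : nat :=
  \big[minn/#|T|]_(S : {set T} | strong_resolving e S) #|S|.

Definition cycle_rel (m : nat) : rel 'I_m :=
  fun i j => (j == (i.+1 %% m) :> nat) || (i == (j.+1 %% m) :> nat).

Definition strong_prod (A B : finType) (eA : rel A) (eB : rel B) : rel (A * B) :=
  fun x y => [|| (x.1 == y.1) && eB x.2 y.2,
                 eA x.1 y.1 && (x.2 == y.2) |
                 eA x.1 y.1 && eB x.2 y.2].
Arguments cycle_rel m : clear implicits.

From mathcomp Require Import all_boot zify.
Set Implicit Arguments. Unset Strict Implicit. Unset Printing Implicit Defensive.

(* Distances in C_(2r+1) ⊠ C_(2t+1) are maxima of the cyclic distances of the
   coordinates.

   Lower bound: if every neighbour of v is at most as far from u as v is, a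
   vertex whose geodesic to u passes through v is v itself; hence a strong
   resolving set meets every mutually maximally distant pair. Two vertices
   antipodal in the second coordinate, or in a common column and antipodal in
   the first, form such a pair, and a set containing no such pair has at most
   r t elements, because antipodality on C_(2n+1) has no independent set of
   more than n vertices. So sdim >= (2r+1)(2t+1) - r t = 3rt + 2r + 2t + 1,
   which is stronger than the stated lower bound.

   Upper bound: the complement of an r x t box strongly resolves. Given two
   vertices of the box, move the first half way round the cycle of the
   coordinate in which they differ more, keeping the other coordinate of the
   second one; the vertex obtained lies outside the box and its geodesics to
   the first vertex pass through the second. *)

Lemma dist_eq_of_geodesic (T : finType) (e : rel T) (D : T -> T -> nat) :
  (forall x, D x x = 0) ->
  (forall x y, D x y = 0 -> x = y) ->
  (forall x x' y, e x x' -> D x y <= (D x' y).+1) ->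
  (forall x y, 0 < D x y -> exists x', e x x' /\ D x' y = (D x y).-1) ->
  (forall x y, D x y < #|T|) ->
  forall x y, dist e x y = D x y.
Proof.
move=> Dxx D_eq0 D_edge D_step D_lt x y.
have path_ge (p : seq T) x0 : path e x0 p -> D x0 (last x0 p) <= size p.
  elim: p x0 => [|z p IH] x0 /=; first by rewrite Dxx.
  by case/andP=> ez /IH ih; apply: leq_trans (D_edge _ _ _ ez) _.
have walk_ge n : walk e n x y -> D x y <= n.
  by case/existsP=> p /andP[/path_ge + /eqP <-]; rewrite size_tuple.
have walk_D n x0 : D x0 y = n -> walk e n x0 y.
  elim: n x0 => [|n IH] x0 Dx0.
    by apply/existsP; exists [tuple]; rewrite /= (D_eq0 _ _ Dx0).
  have [|x' [ex Dx']] := D_step x0 y; first by rewrite Dx0.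
  have /existsP[p /andP[p_path p_last]] := IH x' (etrans Dx' (congr1 _ Dx0)).
  by apply/existsP; exists [tuple of x' :: p]; rewrite /= ex p_path.
have has_walk : has (fun n => walk e n x y) (iota 0 #|T|).
  by apply/hasP; exists (D x y); rewrite ?mem_iota ?D_lt //; apply: walk_D.
rewrite /dist; set n := find _ _.
have n_lt : n < #|T| by rewrite -(size_iota 0 #|T|) -has_find.
have := nth_find 0 has_walk; rewrite nth_iota // add0n => /walk_ge D_le.
apply/eqP; rewrite eqn_leq D_le andbT leqNgt; apply/negP => lt_D.
have := before_find 0 lt_D; rewrite nth_iota ?add0n ?(ltn_trans lt_D) //.
by rewrite walk_D.
Qed.

Definition cycle_adj (m a b : nat) : Prop :=
  a.+1 = b \/ b.+1 = a \/ (a.+1 = m /\ b = 0) \/ (b.+1 = m /\ a = 0).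

Definition cycle_dist (m a b : nat) : nat :=
  minn ((a - b) + (b - a)) (m - ((a - b) + (b - a))).

Section CycleDistance.
Variable m : nat.

Lemma cycle_relE (i j : 'I_m) : cycle_rel m i j <-> cycle_adj m i j.
Proof.
have lt_i := ltn_ord i; have lt_j := ltn_ord j.
have modS k : k < m -> k.+1 %% m = if k.+1 == m then 0 else k.+1.
  by case: eqP => [-> _|ne lt_k]; rewrite ?modnn // modn_small //; lia.
rewrite /cycle_rel !modS //.
by case: (i.+1 =P m); case: (j.+1 =P m); rewrite /cycle_adj; split=> h; lia.
Qed.

Lemma cycle_relC (i j : 'I_m) : cycle_rel m i j = cycle_rel m j i.
Proof. by rewrite /cycle_rel orbC. Qed.

Lemma cycle_distC a b : cycle_dist m a b = cycle_dist m b a.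
Proof. by rewrite /cycle_dist; lia. Qed.

Lemma cycle_distnn a : cycle_dist m a a = 0.
Proof. by rewrite /cycle_dist; lia. Qed.

Implicit Types i j k : 'I_m.

Lemma cycle_dist_eq0 i j : cycle_dist m i j = 0 -> i = j.
Proof. by move: (ltn_ord i) (ltn_ord j); rewrite /cycle_dist => *; apply: ord_inj; lia. Qed.

Lemma cycle_dist_lt i j : cycle_dist m i j < m.
Proof. by move: (ltn_ord i) (ltn_ord j); rewrite /cycle_dist; lia. Qed.

Lemma cycle_dist_triangle i j k : cycle_dist m i k <= cycle_dist m i j + cycle_dist m j k.
Proof. by move: (ltn_ord i) (ltn_ord j) (ltn_ord k); rewrite /cycle_dist; lia. Qed.

Lemma cycle_dist_adj i j k :
  (i == j) || cycle_rel m i j -> cycle_dist m i k <= (cycle_dist m j k).+1.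
Proof.
case/orP=> [/eqP-> // | ]; move: (ltn_ord i) (ltn_ord j) (ltn_ord k).
by rewrite cycle_relE /cycle_adj /cycle_dist; lia.
Qed.

Lemma cycle_dist_step i k :
  exists2 j, (i == j) || cycle_rel m i j & cycle_dist m j k = (cycle_dist m i k).-1.
Proof.
have [d0|pos_d] := posnP (cycle_dist m i k); first by exists i; rewrite ?eqxx ?d0.
suff [a lt_a [adj_a dist_a]] : exists2 a, a < m &
    cycle_adj m i a /\ cycle_dist m a k = (cycle_dist m i k).-1.
  by exists (Ordinal lt_a) => //; apply/orP; right; apply/cycle_relE.
move: (ltn_ord i) (ltn_ord k) pos_d; rewrite /cycle_dist /cycle_adj => lt_i lt_k pos_d.
case: (ltnP i k) => [i_lt_k|k_le_i].
  case: (leqP (k - i) (m - (k - i))) => short; first by exists i.+1; lia.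
  by case: (posnP i) => [i0|i_pos]; [exists m.-1 | exists i.-1]; lia.
case: (leqP (i - k) (m - (i - k))) => short; first by exists i.-1; lia.
by case: (ltnP i.+1 m) => [lt_Si|le_Si]; [exists i.+1 | exists 0]; lia.
Qed.

End CycleDistance.

Lemma cycle_dist_subn m a b : b <= a -> 2 * (a - b) <= m -> cycle_dist m a b = a - b.
Proof. by rewrite /cycle_dist; lia. Qed.

Lemma cycle_dist_le m a b : cycle_dist m a b <= (a - b) + (b - a).
Proof. exact: geq_minl. Qed.

Lemma cycle_dist_odd_le n (i j : 'I_(2 * n + 1)) : cycle_dist (2 * n + 1) i j <= n.
Proof. by move: (ltn_ord i) (ltn_ord j); rewrite /cycle_dist; lia. Qed.

Section StrongProductOfCycles.
Variables m1 m2 : nat.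
Local Notation V := ('I_m1 * 'I_m2)%type.
Local Notation e := (strong_prod (cycle_rel m1) (cycle_rel m2)).
Implicit Types x y z : V.

Definition cheb_dist x y := maxn (cycle_dist m1 x.1 y.1) (cycle_dist m2 x.2 y.2).

Lemma cheb_distC x y : cheb_dist x y = cheb_dist y x.
Proof. by rewrite /cheb_dist cycle_distC [cycle_dist m2 _ _]cycle_distC. Qed.

Lemma cheb_distnn x : cheb_dist x x = 0.
Proof. by rewrite /cheb_dist !cycle_distnn. Qed.

Lemma cheb_dist_eq0 x y : cheb_dist x y = 0 -> x = y.
Proof.
rewrite /cheb_dist => /eqP; rewrite -leqn0 geq_max !leqn0 => /andP[/eqP d1 /eqP d2].
by rewrite [x]surjective_pairing (cycle_dist_eq0 d1) (cycle_dist_eq0 d2) -surjective_pairing.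
Qed.

Lemma cheb_dist_triangle x y z : cheb_dist x z <= cheb_dist x y + cheb_dist y z.
Proof.
have := cycle_dist_triangle x.1 y.1 z.1; have := cycle_dist_triangle x.2 y.2 z.2.
by rewrite /cheb_dist; lia.
Qed.

Lemma strong_prod_cycleC x y : e x y = e y x.
Proof. by rewrite /strong_prod (cycle_relC x.1) (cycle_relC x.2) (eq_sym x.1) (eq_sym x.2). Qed.

Lemma strong_prod_cycle_coords x y : e x y ->
  ((x.1 == y.1) || cycle_rel m1 x.1 y.1) && ((x.2 == y.2) || cycle_rel m2 x.2 y.2).
Proof. by case/or3P=> /andP[-> ->]; rewrite ?orbT. Qed.

Lemma cheb_dist_adj x x' y : e x x' -> cheb_dist x y <= (cheb_dist x' y).+1.
Proof.
move=> /strong_prod_cycle_coords/andP[/cycle_dist_adj d1 /cycle_dist_adj d2].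
by have := d1 y.1; have := d2 y.2; rewrite /cheb_dist; lia.
Qed.

Lemma cheb_dist_step x y : 0 < cheb_dist x y ->
  exists x', e x x' /\ cheb_dist x' y = (cheb_dist x y).-1.
Proof.
rewrite /cheb_dist => pos_d.
have [j1 adj1 d1] := cycle_dist_step x.1 y.1; have [j2 adj2 d2] := cycle_dist_step x.2 y.2.
exists (j1, j2); split; last by rewrite /= d1 d2; lia.
move: adj1 adj2; rewrite /strong_prod /=.
case: eqP => [e1|_]; case: eqP => [e2|_]; first by move: pos_d d1 d2; rewrite -e1 -e2; lia.
all: by case: (cycle_rel m1 _ _); case: (cycle_rel m2 _ _).
Qed.

Lemma dist_strong_prod_cycle x y : dist e x y = cheb_dist x y.
Proof.
apply: dist_eq_of_geodesic; [exact: cheb_distnn | exact: cheb_dist_eq0 |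
  exact: cheb_dist_adj | exact: cheb_dist_step | move=> x0 y0].
have m1_pos : 0 < m1 by apply: leq_ltn_trans (ltn_ord x0.1).
have m2_pos : 0 < m2 by apply: leq_ltn_trans (ltn_ord x0.2).
rewrite card_prod !card_ord gtn_max.
by rewrite !(leq_trans (cycle_dist_lt _ _)) ?leq_pmulr ?leq_pmull.
Qed.

Lemma sresolves_strong_prod_cycle w u v :
  sresolves e w u v =
  (cheb_dist w u == cheb_dist w v + cheb_dist v u) ||
  (cheb_dist w v == cheb_dist w u + cheb_dist u v).
Proof. by rewrite /sresolves !dist_strong_prod_cycle. Qed.

(* Otherwise the neighbour of [v] on a geodesic towards [w] would be farther
   from [u] than [v] is. *)
Lemma geodesic_through_maximal u v w :
  (forall v', e v v' -> cheb_dist u v' <= cheb_dist u v) ->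
  cheb_dist w u = cheb_dist w v + cheb_dist v u -> w = v.
Proof.
move=> v_max d_wu; case: (eqVneq w v) => // neq_wv.
have pos_vw : 0 < cheb_dist v w.
  by rewrite lt0n; apply: contra neq_wv => /eqP/cheb_dist_eq0 ->.
have [v' [vv' d_v'w]] := cheb_dist_step pos_vw.
have := cheb_dist_triangle w v' u; have := v_max _ vv'.
rewrite (cheb_distC w v') (cheb_distC v' u) (cheb_distC w v) (cheb_distC v u) in d_wu *.
lia.
Qed.

End StrongProductOfCycles.

(* The shift by [n] maps [A] into its complement, so [2 #|A| <= 2 n + 1]. *)
Lemma card_antipodal_free n (A : {set 'I_(2 * n + 1)}) :
  {in A &, forall i j : 'I_(2 * n + 1), cycle_dist (2 * n + 1) i j != n} -> #|A| <= n.
Proof.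
move=> A_free; have m_pos : 0 < 2 * n + 1 by lia.
pose shift (i : 'I_(2 * n + 1)) := Ordinal (ltn_pmod (i + n) m_pos).
have shiftE (i : 'I_(2 * n + 1)) :
    (shift i : nat) = if i < n.+1 then i + n else i + n - (2 * n + 1).
  have lt_i := ltn_ord i; case: ifP => /= i_lt; first by rewrite modn_small; lia.
  by rewrite -[in LHS](@subnK (2 * n + 1) (i + n)) ?modnDr ?modn_small; lia.
have shift_inj : injective shift.
  move=> i j /(congr1 (@nat_of_ord _)); rewrite !shiftE.
  by move: (ltn_ord i) (ltn_ord j); case: ifP; case: ifP => *; apply: ord_inj; lia.
have shift_antipodal (i : 'I_(2 * n + 1)) : cycle_dist (2 * n + 1) i (shift i) = n.
  by move: (shiftE i) (ltn_ord i); rewrite /cycle_dist; case: ifP; lia.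
have disj : [disjoint A & shift @: A].
  apply/pred0P => j /=; apply/negP => /andP[jA /imsetP[i iA j_eq]].
  by move: (A_free i j iA jA); rewrite j_eq shift_antipodal eqxx.
have := max_card (A :|: shift @: A); rewrite cardsU (disjoint_setI0 disj) cards0 subn0.
by rewrite card_imset // card_ord; move: #|A| => k; lia.
Qed.

Lemma card_fibers_leq (A B : finType) (I : {set A * B}) k :
  (forall b, #|[set a | (a, b) \in I]| <= k) -> #|I| <= #|[set x.2 | x in I]| * k.
Proof.
move=> fiber_le; rewrite -sum1_card (partition_big snd [in [set x.2 | x in I]]) /=; last first.
  by move=> x xI; apply: imset_f.
rewrite -sum_nat_const leq_sum // => b _; rewrite sum1_card.
apply: leq_trans (fiber_le b).
rewrite -[X in _ <= X](card_imset _ (_ : injective (pair^~ b))); last by move=> a a' [].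
apply/subset_leq_card/subsetP => -[a b'] /andP[ab'I /eqP /= <-].
by apply: imset_f; rewrite inE.
Qed.

Lemma card_ord_lt m n : n <= m -> #|[set i : 'I_m | i < n]| = n.
Proof.
move=> le_nm; rewrite -sum1_card (eq_bigl (fun i : 'I_m => i < n)) => [|i]; last by rewrite inE.
by rewrite (big_ord_narrow le_nm) big_const_ord iter_addn_0 mul1n.
Qed.

Lemma bigmin_leq (T : finType) (P : pred T) (F : T -> nat) n x :
  P x -> \big[minn/n]_(y | P y) F y <= F x.
Proof.
move=> Px; have : x \in index_enum T by rewrite mem_index_enum.
elim: (index_enum T) => // y s IH; rewrite inE big_cons => /orP[/eqP <- | xs].
  by rewrite Px geq_minl.
by case: ifP => _; rewrite ?geq_min IH ?orbT.
Qed.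

Section OddCycles.
Variables r t : nat.
Local Notation V := ('I_(2 * r + 1) * 'I_(2 * t + 1))%type.
Local Notation e := (strong_prod (cycle_rel (2 * r + 1)) (cycle_rel (2 * t + 1))).
Implicit Types u v w : V.

Definition far_pair u v : bool :=
  (cycle_dist (2 * t + 1) u.2 v.2 == t) ||
  (u.2 == v.2) && (cycle_dist (2 * r + 1) u.1 v.1 == r).

Lemma far_pairC u v : far_pair u v = far_pair v u.
Proof. by rewrite /far_pair cycle_distC (eq_sym u.2) [cycle_dist _ u.1 _]cycle_distC. Qed.

Hypotheses (r_pos : 0 < r) (r_le_t : r <= t).

Lemma far_pair_maximal u v :
  far_pair u v -> forall v', e v v' -> cheb_dist u v' <= cheb_dist u v.
Proof.
move=> uv v' vv'; rewrite /cheb_dist.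
have := cycle_dist_odd_le u.1 v'.1; have := cycle_dist_odd_le u.2 v'.2.
case/orP: uv => [/eqP -> | /andP[/eqP eq2 /eqP ->]].
  by have := cycle_dist_odd_le u.1 v.1; lia.
move: vv'; rewrite strong_prod_cycleC => /strong_prod_cycle_coords/andP[_ /cycle_dist_adj].
by move/(_ u.2); rewrite eq2 cycle_distnn cycle_distC; lia.
Qed.

Lemma strong_resolving_far_pair S u v :
  strong_resolving e S -> far_pair u v -> (u \in S) || (v \in S).
Proof.
move=> S_res uv; have /existsP[w /andP[wS]] := forallP (forallP S_res u) v.
rewrite sresolves_strong_prod_cycle => /orP[]/eqP geo.
  by rewrite -(geodesic_through_maximal (far_pair_maximal uv) geo) wS orbT.
by rewrite -(geodesic_through_maximal (far_pair_maximal _) geo) ?wS // far_pairC.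
Qed.

Lemma card_far_pair_free (I : {set V}) :
  {in I &, forall u v, ~~ far_pair u v} -> #|I| <= r * t.
Proof.
move=> I_free; rewrite [r * t]mulnC; apply: leq_trans (card_fibers_leq (k := r) _) _.
  move=> b; apply: card_antipodal_free => a a'; rewrite !inE => abI a'bI.
  by move: (I_free _ _ abI a'bI); rewrite /far_pair eqxx /= negb_or => /andP[_].
rewrite leq_mul2r; apply/orP; right; apply: card_antipodal_free.
move=> _ _ /imsetP[x xI ->] /imsetP[y yI ->].
by move: (I_free _ _ xI yI); rewrite /far_pair negb_or => /andP[].
Qed.

Lemma sdim_lower : 3 * r * t + 2 * r + 2 * t + 1 <= sdim e.
Proof.
rewrite /sdim; apply: (big_ind (fun n => 3 * r * t + 2 * r + 2 * t + 1 <= n)).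
- by rewrite card_prod !card_ord; nia.
- by move=> n n'; rewrite leq_min => -> ->.
move=> S S_res; have: #|~: S| <= r * t.
  apply: card_far_pair_free => u v; rewrite !inE => uS vS.
  by apply/negP => /(strong_resolving_far_pair S_res); rewrite (negbTE uS) (negbTE vS).
have := cardsC S; rewrite card_prod !card_ord; move: #|S| #|~: S| => n n'; lia.
Qed.

Definition box : {set V} :=
  setX [set i : 'I_(2 * r + 1) | i < r] [set j : 'I_(2 * t + 1) | j < t].

Lemma box_geodesic u v : u \in box -> v \in box ->
  (u.2 <= v.2) && ((u.1 - v.1) + (v.1 - u.1) <= v.2 - u.2) ||
  (u.1 <= v.1) && ((u.2 - v.2) + (v.2 - u.2) <= v.1 - u.1) ->
  exists2 w, w \in ~: box & sresolves e w u v.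
Proof.
rewrite !inE; case: u v => [[a1 lt_a1] [a2 lt_a2]] [[b1 lt_b1] [b2 lt_b2]] /=.
move=> /andP[a1r a2t] /andP[b1r b2t] /orP[] /andP[le d].
  have lt_w2 : a2 + t < 2 * t + 1 by lia.
  exists (Ordinal lt_b1, Ordinal lt_w2); first by rewrite !inE /= [_ < t]ltnNge leq_addl andbF.
  rewrite sresolves_strong_prod_cycle; apply/orP; left; rewrite /cheb_dist /= cycle_distnn.
  rewrite !(@cycle_dist_subn (2 * t + 1)); try lia.
  by have := cycle_dist_le (2 * r + 1) b1 a1; lia.
have lt_w1 : a1 + r < 2 * r + 1 by lia.
exists (Ordinal lt_w1, Ordinal lt_b2); first by rewrite !inE /= [_ < r]ltnNge leq_addl.
rewrite sresolves_strong_prod_cycle; apply/orP; left; rewrite /cheb_dist /= cycle_distnn.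
rewrite !(@cycle_dist_subn (2 * r + 1)); try lia.
by have := cycle_dist_le (2 * t + 1) b2 a2; lia.
Qed.

Lemma strong_resolving_box_complement : strong_resolving e (~: box).
Proof.
apply/forallP => u; apply/forallP => v; apply/existsP.
have [uB | uB] := boolP (u \in box); last first.
  by exists u; rewrite inE uB sresolves_strong_prod_cycle cheb_distnn eqxx orbT.
have [vB | vB] := boolP (v \in box); last first.
  by exists v; rewrite inE vB sresolves_strong_prod_cycle cheb_distnn eqxx.
suff [w wB uv] : exists2 w, w \in ~: box & sresolves e w u v by exists w; rewrite wB.
case: u v uB vB => [u1 u2] [v1 v2] uB vB.
have swap : (exists2 w, w \in ~: box & sresolves e w (v1, v2) (u1, u2)) ->
    exists2 w, w \in ~: box & sresolves e w (u1, u2) (v1, v2).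
  by case=> w wB vu; exists w; rewrite // /sresolves orbC.
have [short1|short2] := leqP ((u1 - v1) + (v1 - u1)) ((u2 - v2) + (v2 - u2)).
  case: (leqP u2 v2) => ?; [| apply: swap]; apply: box_geodesic => //=;
    by apply/orP; left; apply/andP; split; lia.
case: (leqP u1 v1) => ?; [| apply: swap]; apply: box_geodesic => //=;
  by apply/orP; right; apply/andP; split; lia.
Qed.

Lemma sdim_upper : sdim e <= 3 * r * t + 2 * r + 2 * t + 1.
Proof.
apply: leq_trans (bigmin_leq _ _ strong_resolving_box_complement) _.
rewrite cardsCs setCK card_prod !card_ord cardsX !card_ord_lt; lia.
Qed.

End OddCycles.

Theorem theorem20 (r t : nat) :
  1 <= r -> r <= t ->
  3 * r * t + 2 * r + 2 * t + 1
    <= sdim (strong_prod (cycle_rel (2 * r + 1)) (cycle_rel (2 * t + 1))) + r./2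
  /\ sdim (strong_prod (cycle_rel (2 * r + 1)) (cycle_rel (2 * t + 1)))
    <= 3 * r * t + 2 * r + 2 * t + 1.
Proof.
move=> r_pos r_le_t; split; last exact: sdim_upper.
exact: leq_trans (sdim_lower r_pos r_le_t) (leq_addr _ _).
Qed.
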